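(* Let $1\le k\le n$, let $\lambda=(\lambda_1,\ldots,\lambda_k)$ with $n-k\ge\lambda_1\ge\cdots\ge\lambda_k\ge0$, set $\lambda_{k+1}=0$, and let $D_\lambda$ be the weighted digraph with sources $e_1,\ldots,e_k$ and sinks $v_1,\ldots,v_k$ described in the context. For integers $C_1,\ldots,C_k$ with $0\le C_i\le\lambda_i$, let $\mathbf P(C)=(p_{11},\ldots,p_{kk})$, where $p_{ii}$ is the unique path in $D_\lambda$ from $e_i$ to $v_i$ whose only diagonal edge is the diagonal edge of row $i$ with label $C_i$. Then: (i) the paths $p_{11},\ldots,p_{kk}$ are pairwise vertex-disjoint if and only if $C_1\ge C_2\ge\cdots\ge C_k$; (ii) if $C_1\ge\cdots\ge C_k$, so that $(C_1,\ldots,C_k)$ describes a Catalan path $C$ constrained by the Young diagram of shape $\lambda$ in the $k\times(n-k)$ rectangle, then $\mathrm{pwt}(C)=(1/\alpha)^{\,n-k-\lambda_1}\,\mathrm{wt}(\mathbf P(C))$, where $\mathrm{wt}(\mathbf P(C))=\prod_{i=1}^k\mathrm{wt}(p_{ii})$.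
   Context: Digraph $D_\lambda$: vertices are points $(x,r)\in\mathbb Z^2$. For each row $i\in\{1,\ldots,k\}$ (a row of $\lambda_i$ parallelograms between horizontal lines $r=i-1$ and $r=i$): top vertices $(x,i-1)$ for $0\le x\le\lambda_i$, bottom vertices $(x,i)$ for $1\le x\le\lambda_i+1$; horizontal edges $(x,i-1)\to(x+1,i-1)$ for $0\le x<\lambda_i$ and $(x,i)\to(x+1,i)$ for $1\le x\le\lambda_i$; diagonal (southeast) edges $(t,i-1)\to(t+1,i)$ for $0\le t\le\lambda_i$, the diagonal edge with this $t$ having label $t$. Coinciding vertices/edges of consecutive rows are identified. Sources $e_i=(0,i-1)$, sinks $v_i=(\lambda_i+1,i)$. Weights: a diagonal edge of label $0$ has weight $1/\beta$; a diagonal edge of row $i$ with label $t>\lambda_{i+1}$ has weight $(1/\alpha)^{t-\lambda_{i+1}}$; all other edges have weight $1$. The weight of a path is the product of its edge weights. Catalan path constrained by $Y$ (Young diagram of shape $\lambda$ in the $k\times(n-k)$ rectangle, NW-justified, rows numbered top to bottom, vertical grid lines labelled $0,\ldots,n-k$ left to right): a south/west unit-step lattice path from the NE to the SW corner of the rectangle never crossing the southeast border of $Y$; it is encoded by $C_1\ge\cdots\ge C_k\ge0$, $C_i\le\lambda_i$, where $C_i$ is the grid-line label of its south step in row $i$. Let $L$ be the lattice path from the NE to the SW corner following the southeast border of $Y$. Edge weights: a south step with $C_i=0$ (on the west border of the rectangle) has weight $1/\beta$, other south steps weight $1$; a west step lying on $L$ has weight $1/\alpha$, other west steps weight $1$.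 $\mathrm{pwt}(C)$ is the product of these edge weights. *)

From HB Require Import structures.
From mathcomp Require Import all_boot all_order all_algebra.
Set Implicit Arguments. Unset Strict Implicit. Unset Printing Implicit Defensive.
Import Order.TTheory GRing.Theory Num.Theory.

(* Conventions:
   - lam : seq nat of size k encodes lambda; lambda_i = nth 0 lam (i-1) for
     1 <= i <= k, and lambda_{k+1} = nth 0 lam k = 0 (the convention of the paper).
   - Vertices of D_lambda are points (x, r) of nat * nat (all coordinates are
     nonnegative).  Since vertices are just points, coinciding vertices/edges of
     consecutive rows are automatically identified.
   - Indices i range over 1..k. *)

Definition lamb (lam : seq nat) (i : nat) : nat := nth 0%N lam i.-1.

Definition vert := (nat * nat)%type.

Definition row_edge (lam : seq nat) (i : nat) (u w : vert) : bool :=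
  let l := lamb lam i in
  [|| [&& u.2 == i.-1, w.2 == i.-1, w.1 == u.1.+1 & (u.1 < l)%N],
      [&& u.2 == i, w.2 == i, w.1 == u.1.+1 & (1 <= u.1 <= l)%N]
    | [&& u.2 == i.-1, w.2 == i, w.1 == u.1.+1 & (u.1 <= l)%N]].

Definition edgeD (lam : seq nat) (u w : vert) : bool :=
  has (fun i => row_edge lam i u w) (iota 1 (size lam)).

Definition is_diag (e : vert * vert) : bool := e.2.2 == e.1.2.+1.

Definition src (i : nat) : vert := (0%N, i.-1).
Definition snk (lam : seq nat) (i : nat) : vert := ((lamb lam i).+1, i).

Definition diag_edge (i t : nat) : vert * vert := ((t, i.-1), (t.+1, i)).

Definition path_edges (p : seq vert) : seq (vert * vert) := zip p (behead p).

Definition is_dpath (lam : seq nat) (p : seq vert) (a b : vert) : bool :=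
  if p is x :: s then [&& x == a, path (edgeD lam) x s & last x s == b]
  else false.

Definition diag_edges (p : seq vert) : seq (vert * vert) :=
  [seq e <- path_edges p | is_diag e].

Local Open Scope ring_scope.

Definition edge_wt (R : fieldType) (alpha beta : R) (lam : seq nat)
    (e : vert * vert) : R :=
  if is_diag e then
    let t := e.1.1 in let i := e.2.2 in
    if t == 0%N then beta^-1
    else if (lamb lam i.+1 < t)%N then alpha^-1 ^+ (t - lamb lam i.+1)
    else 1
  else 1.

Definition path_wt (R : fieldType) (alpha beta : R) (lam : seq nat)
    (p : seq vert) : R :=
  \prod_(e <- path_edges p) edge_wt alpha beta lam e.

(* Grid points (x, y): x is the
   vertical grid-line label (0..n-k, left to right), y the horizontal grid line
   (0..k, top to bottom).
   A path is encoded by c : nat -> nat, c i being the label of its south step in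
   row i (1 <= i <= k); with the conventions c_0 = n-k, c_{k+1} = 0. *)
Definition cext (k top : nat) (c : nat -> nat) (i : nat) : nat :=
  if i == 0%N then top else if (i <= k)%N then c i else 0%N.

Definition west_steps (k top : nat) (c : nat -> nat) (i : nat) : seq (vert * vert) :=
  [seq ((x.+1, i), (x, i)) |
     x <- rev (iota (cext k top c i.+1) (cext k top c i - cext k top c i.+1))].

Definition south_step (k top : nat) (c : nat -> nat) (i : nat) : vert * vert :=
  ((cext k top c i, i.-1), (cext k top c i, i)).

(* all unit steps of the lattice path from NE corner (top,0) to SW corner (0,k) *)
Definition lattice_steps (k top : nat) (c : nat -> nat) : seq (vert * vert) :=
  west_steps k top c 0 ++
  flatten [seq south_step k top c i :: west_steps k top c i | i <- iota 1 k].

Definition is_south (s : vert * vert) : bool := s.1.1 == s.2.1.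

Definition border_steps (n : nat) (lam : seq nat) : seq (vert * vert) :=
  lattice_steps (size lam) (n - size lam) (lamb lam).

Definition step_wt (R : fieldType) (alpha beta : R) (n : nat) (lam : seq nat)
    (s : vert * vert) : R :=
  if is_south s then (if s.1.1 == 0%N then beta^-1 else 1)
  else if s \in border_steps n lam then alpha^-1 else 1.

Definition pwt (R : fieldType) (alpha beta : R) (n : nat) (lam : seq nat)
    (C : nat -> nat) : R :=
  \prod_(s <- lattice_steps (size lam) (n - size lam) C) step_wt alpha beta n lam s.

(* On the line r = i, the path p_ii occupies exactly the points with x > C_i
   and p_(i+1)(i+1) those with x <= C_(i+1); every other pair of paths lives on
   disjoint lines.  Hence disjointness is monotonicity of C.  For the weights,
   the south step of C in row i together with the west steps of C on L in row i
   carry exactly the weight of the diagonal edge of p_ii: 1/beta iff C_i = 0,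
   and one 1/alpha for each x in [lambda_(i+1), C_i).  The remaining west steps
   of C on L are those on the top border, x in [lambda_1, n-k). *)

From mathcomp Require Import all_boot all_order all_algebra zify.
Import GRing.Theory.

Set Implicit Arguments.
Unset Strict Implicit.
Unset Printing Implicit Defensive.

Definition unit_step (u w : vert) : bool :=
  (w.1 == u.1.+1) && ((w.2 == u.2) || (w.2 == u.2.+1)).

Lemma edgeD_unit_step lam u w : edgeD lam u w -> unit_step u w.
Proof.
case/hasP=> i _; rewrite /row_edge /unit_step.
by case/or3P=> /and4P[/eqP-> /eqP-> /eqP-> _]; lia.
Qed.

Lemma diag_edges_cons x y s : diag_edges [:: x, y & s] =
  if is_diag (x, y) then (x, y) :: diag_edges (y :: s) else diag_edges (y :: s).
Proof. by []. Qed.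

Lemma mem_path_no_diag x s : path unit_step x s -> diag_edges (x :: s) = [::] ->
  forall v, (v \in x :: s) = (v.2 == x.2) && (x.1 <= v.1 <= (last x s).1).
Proof.
elim: s x => [|y s IH] [x1 x2] /=.
  by move=> _ _ [v1 v2]; rewrite inE xpair_eqE /=; lia.
case: y IH => y1 y2 IH /andP[/andP[/eqP y1_eq y2_eq] y_path].
rewrite diag_edges_cons /is_diag /=; case: ifP => // xy_diag ys_diag [v1 v2].
have mem_ys := IH _ y_path ys_diag.
have := mem_ys (last (y1, y2) s); rewrite mem_last in_cons mem_ys xpair_eqE /=.
by move: y1_eq y2_eq xy_diag => /=; lia.
Qed.

Lemma mem_path_one_diag x s t r : path unit_step x s ->
  diag_edges (x :: s) = [:: ((t, r), (t.+1, r.+1))] ->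
  [/\ x.2 = r, x.1 <= t &
   forall v, (v \in x :: s) = ((v.2 == r) && (x.1 <= v.1 <= t)) ||
                              ((v.2 == r.+1) && (t < v.1 <= (last x s).1))].
Proof.
elim: s x => [|y s IH] [x1 x2] //=.
case: y IH => y1 y2 IH /andP[/andP[/eqP y1_eq y2_eq] y_path].
rewrite diag_edges_cons /is_diag /=; case: ifP => xy_diag ys_diag.
  case: ys_diag => ? ? ? ? ys_diag; subst; have mem_ys := mem_path_no_diag y_path ys_diag.
  split=> // -[v1 v2]; have := mem_ys (last (t.+1, r.+1) s).
  by rewrite mem_last in_cons mem_ys xpair_eqE /=; lia.
have [/= yr yt mem_ys] := IH _ y_path ys_diag.
split; [by move: y2_eq xy_diag => /=; lia | by move: y1_eq yt => /=; lia | move=> [v1 v2]].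
by rewrite in_cons mem_ys xpair_eqE /=; move: y1_eq y2_eq xy_diag yr yt => /=; lia.
Qed.

Lemma mem_dpath_one_diag lam i c p : 0 < i ->
  is_dpath lam p (src i) (snk lam i) -> diag_edges p = [:: diag_edge i c] ->
  forall v, (v \in p) =
    ((v.2 == i.-1) && (v.1 <= c)) || ((v.2 == i) && (c < v.1 <= (lamb lam i).+1)).
Proof.
case: p => [|x s] //; case: i => // i _ /and3P[/eqP-> hp /eqP hl] hd v.
have [_ _ ->] := mem_path_one_diag (sub_path (@edgeD_unit_step lam) hp) hd.
by rewrite hl.
Qed.

Lemma disjoint_staircase_paths_iff k (c l : nat -> nat) (P : nat -> seq vert) :
  (forall i, 1 <= i <= k -> c i <= l i) ->
  (forall i, 1 <= i <= k -> forall v, (v \in P i) =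
     ((v.2 == i.-1) && (v.1 <= c i)) || ((v.2 == i) && (c i < v.1 <= (l i).+1))) ->
  (forall i j, 1 <= i -> i < j <= k -> forall v, v \in P i -> v \notin P j)
  <-> (forall i, 1 <= i < k -> c i.+1 <= c i).
Proof.
move=> le_cl memP; split=> [disj i ik | c_mono i j i1 /andP[ij jk] v].
  rewrite leqNgt; apply/negP => lt_c.
  have := disj i i.+1 _ _ ((c i).+1, i).
  have := le_cl i.
  by rewrite !memP /=; lia.
rewrite !memP; try lia.
have [-> | ne_j] := eqVneq j i.+1; last by lia.
by have := c_mono i; lia.
Qed.

Lemma path_wt_diag_edges (R : fieldType) (alpha beta : R) lam p :
  path_wt alpha beta lam p = (\prod_(e <- diag_edges p) edge_wt alpha beta lam e)%R.
Proof.
rewrite /path_wt /diag_edges big_filter [RHS]big_mkcond /=.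
by apply: eq_bigr => e _; rewrite /edge_wt; case: ifP.
Qed.

Lemma mem_west_steps k top c j x i :
  (((x.+1, i), (x, i)) \in west_steps k top c j) =
  (i == j) && (cext k top c j.+1 <= x < cext k top c j).
Proof.
apply/mapP/andP => [[y] | [/eqP-> x_in]].
  by rewrite mem_rev mem_iota => y_in [-> -> _ _]; split=> //; lia.
by exists x; rewrite // mem_rev mem_iota; lia.
Qed.

Lemma cext_gt k top c j : k < j -> cext k top c j = 0.
Proof. by rewrite /cext; case: j => // j; rewrite ltnNge => /negbTE->. Qed.

Lemma mem_lattice_steps_west k top c x i :
  (((x.+1, i), (x, i)) \in lattice_steps k top c) =
  (cext k top c i.+1 <= x < cext k top c i).
Proof.
rewrite /lattice_steps mem_cat mem_west_steps; apply/idP/idP.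
  case/orP=> [/andP[/eqP-> //] | /flattenP[_ /mapP[j _ ->]]].
  rewrite in_cons mem_west_steps => /orP[/eqP[e1 _ e2 _] | /andP[/eqP-> //]]; lia.
case: i => [-> // | i x_in]; apply/orP; right; apply/flattenP.
exists (south_step k top c i.+1 :: west_steps k top c i.+1).
  apply/map_f; rewrite mem_iota; case: (leqP i.+1 k) => [|/cext_gt k_lt]; first lia.
  by move: x_in; rewrite k_lt ltn0 andbF.
by rewrite in_cons mem_west_steps eqxx x_in orbT.
Qed.

Lemma count_iota_itv a b m d :
  count (fun x => a <= x < b) (iota m d) = minn b (m + d) - maxn a m.
Proof.
elim: d m => [|d IHd] m /=; first lia.
by rewrite IHd; case: (leqP a m); case: (ltnP m b); lia.
Qed.

Section LatticePathWeight.

Variables (R : fieldType) (alpha beta : R) (n : nat) (lam : seq nat).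

Local Notation k := (size lam).
Local Notation ext := (cext k (n - k)).
Local Notation wt := (step_wt alpha beta n lam).

Lemma west_steps_wt c i : ext c i.+1 <= ext c i ->
  (\prod_(s <- west_steps k (n - k) c i) wt s =
   alpha^-1 ^+ (minn (ext (lamb lam) i) (ext c i) -
                maxn (ext (lamb lam) i.+1) (ext c i.+1)))%R.
Proof.
move=> c_le; rewrite /west_steps big_map big_rev.
under eq_bigr => x _ do
  rewrite /step_wt /is_south /= eqn_leq ltnn /= /border_steps mem_lattice_steps_west.
by rewrite -big_mkcond big_const_seq iter_mulr_1 count_iota_itv subnKC.
Qed.

Variable C : nat -> nat.
Hypothesis lam1_le : lamb lam 1 <= n - k.
Hypothesis C_le_lam : forall i, 1 <= i <= k -> C i <= lamb lam i.
Hypothesis C_mono : forall i, 1 <= i < k -> C i.+1 <= C i.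

Lemma ext_lamb j : 0 < j -> ext (lamb lam) j = lamb lam j.
Proof.
rewrite /cext; case: j => // j _; case: ifP => // /negbT.
by rewrite -leqNgt => k_le; rewrite /lamb nth_default.
Qed.

Lemma ext_C_le j : 0 < j -> ext C j <= lamb lam j.
Proof. by rewrite /cext; case: j => // j _; case: ifP => // j_le; apply: C_le_lam. Qed.

Lemma ext_C_mono i : ext C i.+1 <= ext C i.
Proof.
case: i => [|i]; first by rewrite [ext C 0]/cext; apply: leq_trans (ext_C_le _) lam1_le.
rewrite /cext /=; case: ifP => [Si_le | _] //.
by rewrite ifT ?C_mono //; lia.
Qed.

Lemma row_wt i : 1 <= i <= k ->
  (wt (south_step k (n - k) C i) * \prod_(s <- west_steps k (n - k) C i) wt s =
   edge_wt alpha beta lam (diag_edge i (C i)))%R.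
Proof.
move=> i_range; have /andP[i_gt0 i_le] := i_range.
have ext_Ci : ext C i = C i by rewrite /cext i_le gtn_eqF.
have Ci_le := C_le_lam i_range; have Si_le := ext_C_le (ltn0Sn i).
rewrite west_steps_wt ?ext_C_mono // !ext_lamb // ext_Ci (minn_idPr Ci_le) (maxn_idPl Si_le).
rewrite /step_wt /south_step /is_south /= eqxx ext_Ci.
rewrite /edge_wt /diag_edge /is_diag /= prednK // eqxx.
case: eqP => [-> | _]; first by rewrite sub0n mulr1.
by rewrite mul1r; case: ltnP => // C_le; rewrite -subn_eq0 in C_le; rewrite (eqP C_le).
Qed.

Lemma pwt_catalan_path :
  pwt alpha beta n lam C =
  (alpha^-1 ^+ (n - k - lamb lam 1) *
   \prod_(1 <= i < k.+1) edge_wt alpha beta lam (diag_edge i (C i)))%R.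
Proof.
rewrite /pwt /lattice_steps big_cat west_steps_wt ?ext_C_mono // (ext_lamb (ltn0Sn 0)).
rewrite {1 2}/cext /= minnn (maxn_idPl (ext_C_le _)) //; congr (_ * _)%R.
rewrite big_flatten big_map /index_iota subSS subn0 big_seq [RHS]big_seq; apply: eq_bigr => i.
by rewrite mem_iota add1n => i_range; rewrite -row_wt // big_cons.
Qed.

End LatticePathWeight.

Theorem lemma2 (R : fieldType) (alpha beta : R) (n k : nat) (lam : seq nat)
    (C : nat -> nat) (P : nat -> seq vert) :
  alpha != 0%R -> beta != 0%R ->
  (1 <= k <= n)%N ->
  size lam = k ->
  (lamb lam 1 <= n - k)%N ->
  (forall i, (1 <= i < k)%N -> (lamb lam i.+1 <= lamb lam i)%N) ->
  (forall i, (1 <= i <= k)%N -> (C i <= lamb lam i)%N) ->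
  (forall i, (1 <= i <= k)%N ->
     is_dpath lam (P i) (src i) (snk lam i) /\
     diag_edges (P i) = [:: diag_edge i (C i)]) ->
  ((forall i j, (1 <= i)%N -> (i < j <= k)%N ->
      forall v, v \in P i -> v \notin P j)
   <-> (forall i, (1 <= i < k)%N -> (C i.+1 <= C i)%N))
  /\
  ((forall i, (1 <= i < k)%N -> (C i.+1 <= C i)%N) ->
   pwt alpha beta n lam C =
   (alpha^-1 ^+ (n - k - lamb lam 1) *
    \prod_(1 <= i < k.+1) path_wt alpha beta lam (P i))%R).
Proof.
move=> _ _ _ <- lam1_le _ C_le P_ok.
have memP i (i_range : 1 <= i <= size lam) :=
  mem_dpath_one_diag (proj1 (andP i_range)) (P_ok i i_range).1 (P_ok i i_range).2.
split; first exact: disjoint_staircase_paths_iff C_le memP.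
move=> C_mono; rewrite pwt_catalan_path //; congr (_ * _)%R.
apply: eq_big_nat => i i_range.
by rewrite path_wt_diag_edges (P_ok i i_range).2 big_seq1.
Qed.
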